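(* Let $q=2^n$, let $B$ be a $k$-subset of $\mathrm{GF}(q)$ with $k\ge 3$, and let $\mathcal B=\mathrm{GA}_1(q)(B)$. For pairwise distinct $u_1,u_2,u_3\in\mathrm{GF}(q)$ define $I_B(u_1,u_2,u_3)=|\{(x,y)\in\mathrm{GF}(q)^2: u_ix+y\in B\ (i=1,2,3)\}|$. Then $(\mathrm{GF}(q),\mathcal B)$ is a $3$-design if and only if $I_B(u_1,u_2,u_3)$ is independent of the specific choice of the pairwise distinct elements $u_1,u_2,u_3$.
   Context: $\mathrm{GA}_1(q)$ is the group of permutations $\pi_{a,b}(x)=ax+b$ of $\mathrm{GF}(q)$ with $(a,b)\in\mathrm{GF}(q)^*\times\mathrm{GF}(q)$; for $B\subseteq\mathrm{GF}(q)$, $\mathrm{GA}_1(q)(B)=\{\pi(B):\pi\in\mathrm{GA}_1(q)\}$ is the orbit of $B$ (a set of $k$-subsets). A pair $(\mathcal P,\mathcal B)$ with $\mathcal B$ a set of $k$-subsets of $\mathcal P$ is a $3$-design if every $3$-subset of $\mathcal P$ is contained in exactly $\lambda$ members of $\mathcal B$, for some constant $\lambda$. *)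

From HB Require Import structures.
From mathcomp Require Import all_boot all_order all_algebra all_field.
Set Implicit Arguments. Unset Strict Implicit. Unset Printing Implicit Defensive.
Import GRing.Theory.
Local Open Scope ring_scope.

Definition affine_map (F : finFieldType) (a b : F) (x : F) : F := a * x + b.

Definition GA1_orbit (F : finFieldType) (B : {set F}) : {set {set F}} :=
  [set (affine_map ab.1 ab.2) @: B | ab in [set ab : F * F | ab.1 != 0]].

Definition is_3design (T : finType) (k : nat) (Bs : {set {set T}}) : Prop :=
  (forall Bl, Bl \in Bs -> #|Bl| = k) /\
  exists lam : nat, forall S : {set T}, #|S| = 3 ->
    #|[set Bl in Bs | S \subset Bl]| = lam.

Definition I_B (F : finFieldType) (B : {set F}) (u1 u2 u3 : F) : nat :=
  #|[set xy : F * F | [&& u1 * xy.1 + xy.2 \in B, u2 * xy.1 + xy.2 \in B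
                        & u3 * xy.1 + xy.2 \in B]]|.

From HB Require Import structures.
From mathcomp Require Import all_boot all_order all_algebra all_field.
From mathcomp Require Import ring.
Set Implicit Arguments.
Unset Strict Implicit.
Unset Printing Implicit Defensive.
Import GRing.Theory.
Local Open Scope ring_scope.

(* The pairs (x, y) with x = 0 contribute |B| to I_B(u1, u2, u3); those with
   x <> 0 are exactly the inverses of the affine maps pi with {u1, u2, u3}
   inside pi(B).  Every block of the orbit equals pi(B) for exactly m maps pi,
   m > 0 being the order of the stabiliser of B, so
   I_B(u1, u2, u3) = |B| + m * #{blocks containing {u1, u2, u3}}.
   Neither the characteristic nor the bound k >= 3 plays a role: the
   equivalence holds for every block B of every finite field. *)

Lemma cards3P (T : finType) (A : {set T}) :
  reflect (exists x y z : T, [/\ x != y, x != z, y != z & A = [set x; y; z]])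
          (#|A| == 3).
Proof.
apply: (iffP idP) => [A3 | [x [y [z [xy xz yz ->]]]]]; last first.
  by rewrite -setUA cardsU1 cards2 yz !inE negb_or xy xz.
have /card_gt0P [x xA] : (0 < #|A|)%N by rewrite (eqP A3).
have /cards2P [y [z [yz Ax]]] : #|A :\ x| == 2.
  by move: A3; rewrite (cardsD1 x) xA add1n eqSS.
have : (y \in A :\ x) && (z \in A :\ x) by rewrite Ax !inE !eqxx orbT.
rewrite !inE => /andP [/andP [yx _] /andP [zx _]].
exists x, y, z; split=> //; rewrite 1?eq_sym //.
by rewrite -setUA -Ax setD1K.
Qed.

Lemma card_preim_const_fibers (T U : finType) (f : T -> U) (A : {set T})
    (P : pred U) (m : nat) :
  (forall y, y \in f @: A -> #|[set x in A | f x == y]| = m) ->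
  #|[set x in A | P (f x)]| = (#|[set y in f @: A | P y]| * m)%N.
Proof.
move=> fiberE; rewrite -!sum1dep_card big_distrl !big_mkcondr.
rewrite (partition_big_imset f A) /=; apply: eq_bigr => y /fiberE <-.
rewrite (eq_bigr (fun=> nat_of_bool (P y))) => [|x /andP [_ /eqP ->]] //.
by rewrite sum_nat_const cardsE mul1n; case: (P y); rewrite ?muln1 ?muln0.
Qed.

Section AffineGroup.

Variable F : finFieldType.

Definition affine_units : {set F * F} := [set s | s.1 != 0].
Definition affine_fun (s : F * F) : F -> F := affine_map s.1 s.2.
Definition affine_comp (s t : F * F) : F * F := (s.1 * t.1, s.1 * t.2 + s.2).
Definition affine_inv (s : F * F) : F * F := (s.1^-1, - (s.1^-1 * s.2)).

Lemma affine_fun_comp s t x :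
  affine_fun (affine_comp s t) x = affine_fun s (affine_fun t x).
Proof. by rewrite /affine_fun /affine_map /=; ring. Qed.

Lemma affine_fun1 : affine_fun (1, 0) =1 id.
Proof. by move=> x; rewrite /affine_fun /affine_map /= mul1r addr0. Qed.

Lemma affine_unitsP s : reflect (s.1 != 0) (s \in affine_units).
Proof. by rewrite inE; apply: idP. Qed.

Lemma affine_comp_units s t :
  s \in affine_units -> t \in affine_units -> affine_comp s t \in affine_units.
Proof. by rewrite !inE /= mulf_eq0 => /negPf-> /negPf->. Qed.

Lemma affine_inv_units s : s \in affine_units -> affine_inv s \in affine_units.
Proof. by rewrite !inE invr_eq0. Qed.

Section Unit.

Variable s : F * F.
Hypothesis s_unit : s \in affine_units.

Let s1_neq0 : s.1 != 0. Proof. exact/affine_unitsP. Qed.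

Lemma affine_funK : cancel (affine_fun s) (affine_fun (affine_inv s)).
Proof. by move=> x; rewrite /affine_fun /affine_map /=; field. Qed.

Lemma affine_fun_inj : injective (affine_fun s).
Proof. exact: can_inj affine_funK. Qed.

Lemma affine_invK : affine_inv (affine_inv s) = s.
Proof.
case: s s1_neq0 => a b /= a0; rewrite /affine_inv /= invrK.
by congr pair; field.
Qed.

Lemma affine_compVl : affine_comp (affine_inv s) s = (1, 0).
Proof. by rewrite /affine_comp /affine_inv /= mulVf // addrN. Qed.

Lemma affine_compKV t : affine_comp s (affine_comp (affine_inv s) t) = t.
Proof. by case: t => c d; rewrite /affine_comp /=; congr pair; field. Qed.

Lemma affine_comp_inj : injective (affine_comp s).
Proof.
move=> [c d] [c' d'] [] /(mulfI s1_neq0) -> /addIr /(mulfI s1_neq0) -> //.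
Qed.

End Unit.

Lemma card_affine_units_inv (P : pred (F * F)) :
  #|[set p in affine_units | P (affine_inv p)]| =
  #|[set s in affine_units | P s]|.
Proof.
rewrite -(card_in_imset (f := affine_inv)); last first.
  move=> p q /setIdP [pu _] /setIdP [qu _] pq.
  by rewrite -(affine_invK pu) pq affine_invK.
apply: eq_card => s; rewrite [in RHS]inE.
apply/idP/andP => [/imsetP [p /setIdP [pu Pp] ->] | [su Ps]].
  by split; first exact: affine_inv_units.
by rewrite -(affine_invK su) imset_f // inE affine_inv_units // affine_invK.
Qed.

End AffineGroup.

Section Orbit.

Variables (F : finFieldType) (B : {set F}).

Definition affine_image (s : F * F) : {set F} := affine_fun s @: B.
Definition affine_stab : {set F * F} :=
  [set s in affine_units F | affine_image s == B].

Lemma GA1_orbitE : GA1_orbit B = affine_image @: affine_units F.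
Proof. by []. Qed.

Lemma affine_image_comp s t :
  affine_image (affine_comp s t) = affine_fun s @: affine_image t.
Proof.
by rewrite /affine_image -imset_comp; apply: eq_imset; exact: affine_fun_comp.
Qed.

Lemma card_affine_image s : s \in affine_units F -> #|affine_image s| = #|B|.
Proof. by move=> su; rewrite card_imset //; exact: affine_fun_inj. Qed.

Lemma affine_image1 : affine_image (1, 0) = B.
Proof. by rewrite -[RHS]imset_id; apply: eq_imset; exact: affine_fun1. Qed.

Lemma affine_stab_gt0 : (0 < #|affine_stab|)%N.
Proof.
by apply/card_gt0P; exists (1, 0); rewrite !inE oner_neq0 affine_image1 eqxx.
Qed.

Lemma affine_fiberE t : t \in affine_units F ->
  [set s in affine_units F | affine_image s == affine_image t] =
  affine_comp t @: affine_stab.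
Proof.
move=> tu; apply/setP => s; apply/setIdP/imsetP => [[su /eqP st] | [r]].
  exists (affine_comp (affine_inv t) s); last by rewrite affine_compKV.
  apply/setIdP; split; first by rewrite affine_comp_units ?affine_inv_units.
  rewrite affine_image_comp st -affine_image_comp affine_compVl //.
  by rewrite affine_image1.
case/setIdP => ru /eqP rB ->; split; first exact: affine_comp_units.
by rewrite affine_image_comp rB.
Qed.

Lemma card_affine_fiber t : t \in affine_units F ->
  #|[set s in affine_units F | affine_image s == affine_image t]| =
  #|affine_stab|.
Proof.
by move=> tu; rewrite affine_fiberE // card_imset //; exact: affine_comp_inj.
Qed.

Lemma card_blocks_cover (S : {set F}) :
  #|[set s in affine_units F | S \subset affine_image s]| =
  (#|[set Bl in GA1_orbit B | S \subset Bl]| * #|affine_stab|)%N.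
Proof.
rewrite GA1_orbitE; apply: card_preim_const_fibers => _ /imsetP [t tu ->].
exact: card_affine_fiber.
Qed.

Lemma mem_affine_image_inv p u : p \in affine_units F ->
  (u \in affine_image (affine_inv p)) = (affine_fun p u \in B).
Proof.
move=> pu; rewrite /affine_image -{1}(affine_funK pu u) mem_imset //.
exact/affine_fun_inj/affine_inv_units.
Qed.

Lemma I_B_affine_count u1 u2 u3 :
  I_B B u1 u2 u3 =
  (#|B| +
   #|[set s in affine_units F | [set u1; u2; u3] \subset affine_image s]|)%N.
Proof.
rewrite /I_B -(cardsID [set xy : F * F | xy.1 == 0]); congr addn.
  have pair0_inj : injective (fun y : F => (0 : F, y)) by move=> y y' [].
  rewrite -(card_imset B pair0_inj); apply: eq_card => -[x y]; rewrite !inE /=.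
  case: (eqVneq x 0) => [-> | x0]; last first.
    rewrite andbF; apply/esym/imsetP => -[y0 _ [x0E _]].
    by rewrite x0E eqxx in x0.
  by rewrite !mulr0 !add0r !andbb andbT (mem_imset _ _ pair0_inj).
rewrite -card_affine_units_inv; apply: eq_card => -[x y]; rewrite !inE /=.
case: (eqVneq x 0) => //= x0.
rewrite !subUset !sub1set !mem_affine_image_inv ?inE // -andbA.
by rewrite /affine_fun /affine_map /= ![x * _]mulrC.
Qed.

Lemma I_B_blocks u1 u2 u3 :
  I_B B u1 u2 u3 =
  (#|B| + #|[set Bl in GA1_orbit B | [set u1; u2; u3] \subset Bl]|
          * #|affine_stab|)%N.
Proof. by rewrite I_B_affine_count card_blocks_cover. Qed.

End Orbit.

Theorem lemma7 (F : finFieldType) (n : nat) (hq : #|F| = (2 ^ n)%N)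
  (B : {set F}) (k : nat) (hB : #|B| = k) (hk : (3 <= k)%N) :
  is_3design k (GA1_orbit B) <->
  exists c : nat, forall u1 u2 u3 : F,
    u1 != u2 -> u1 != u3 -> u2 != u3 -> I_B B u1 u2 u3 = c.
Proof.
have stab_gt0 := affine_stab_gt0 B.
split=> [[_ [lam lamE]] | [c cE]].
  exists (k + lam * #|affine_stab B|)%N => u1 u2 u3 u12 u13 u23.
  by rewrite I_B_blocks hB lamE //; apply/eqP/cards3P; exists u1, u2, u3.
split=> [_ /imsetP [s su ->] | ]; first by rewrite card_affine_image.
exists ((c - k) %/ #|affine_stab B|)%N.
move=> S /eqP /cards3P [u1 [u2 [u3 [u12 u13 u23 ->]]]].
by rewrite -(cE u1 u2 u3 u12 u13 u23) I_B_blocks hB addKn mulnK.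
Qed.
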